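(* Let $e_1,e_2,e_3\in\mathbb{C}$ be pairwise distinct and let $\mathfrak{h}$ be a Lie subalgebra of finite codimension in $\mathfrak{R}_{e_1,e_2,e_3}$. Then every solvable ideal of $\mathfrak{h}$ is zero.
   Context: Work over $\mathbb{C}$. Let $E_{e_1,e_2,e_3}=\mathbb{C}[v_1,v_2,v_3]/I$, where $I$ is the ideal generated by $v_i^2-v_j^2+e_i-e_j$, $i,j=1,2,3$, and let $\hat v_i$ be the image of $v_i$. Let $\alpha_1,\alpha_2,\alpha_3$ be a basis of $\mathfrak{so}_3(\mathbb{C})$ with $[\alpha_1,\alpha_2]=\alpha_3$, $[\alpha_2,\alpha_3]=\alpha_1$, $[\alpha_3,\alpha_1]=\alpha_2$. The Lie algebra $\mathfrak{so}_3(\mathbb{C})\otimes_{\mathbb{C}}E_{e_1,e_2,e_3}$ has bracket $[\alpha\otimes h_1,\beta\otimes h_2]=[\alpha,\beta]\otimes h_1h_2$, and $\mathfrak{R}_{e_1,e_2,e_3}$ is its Lie subalgebra generated by $\alpha_i\otimes\hat v_i$, $i=1,2,3$. *)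

From HB Require Import structures.
From mathcomp Require Import all_boot all_algebra.
From mathcomp Require Import boolp.
From mathcomp Require Import Rstruct.
From mathcomp Require Import complex.
From mathcomp Require Import mpoly ring_quotient generic_quotient.
From mathcomp Require Import ring.

Set Implicit Arguments.
Unset Strict Implicit.
Unset Printing Implicit Defensive.
Import GRing.Theory Num.Theory.
Local Open Scope ring_scope.

Definition CC : numClosedFieldType := Rdefinitions.R[i].

(* The polynomial ring C[v1,v2,v3]; variable v_(i+1) is 'X_i, i : 'I_3. *)
Notation Pol := {mpoly CC[3]}.

Section Quotient_E.
Variables (e1 e2 e3 : CC).

Definition ee (i : 'I_3) : CC := [:: e1; e2; e3]`_i.

Definition gen_I (i j : 'I_3) : Pol := 'X_i ^+ 2 - 'X_j ^+ 2 + (ee i - ee j)%:MP.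

Definition in_I (p : Pol) : Prop :=
  exists q : 'I_3 -> 'I_3 -> Pol, p = \sum_i \sum_j q i j * gen_I i j.

Definition Ipred : {pred Pol} := fun p => `[< in_I p >].

Lemma Ipred_closed : idealr_closed Ipred.
Proof.
split.
- apply/asboolP; exists (fun _ _ => 0).
  by rewrite big1 // => i _; rewrite big1 // => j _; rewrite mul0r.
- apply/negP => /asboolP [q Hq].
  pose z (i : 'I_3) : CC := sqrtC (- ee i).
  have /(congr1 (meval z)) : (1 : Pol) = \sum_i \sum_j q i j * gen_I i j by [].
  rewrite meval1 raddf_sum big1; first by move/eqP; rewrite oner_eq0.
  move=> i _.
  rewrite raddf_sum big1 // => j _ /=.
  rewrite mevalM /gen_I mevalD mevalB mevalC !rmorphXn /= !mevalXU !sqrtCK.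
  rewrite [X in _ * X](_ : _ = 0) ?mulr0 //; ring.
- move=> a u v /asboolP [qu ->] /asboolP [qv ->]; apply/asboolP.
  exists (fun i j => a * qu i j + qv i j).
  rewrite mulr_sumr -big_split /=; apply: eq_bigr => i _.
  rewrite mulr_sumr -big_split /=; apply: eq_bigr => j _.
  by rewrite mulrDl mulrA.
Qed.

HB.instance Definition _ := isIdealr.Build Pol Ipred Ipred_closed.

Definition E := {ideal_quot Ipred}.

Definition toE (p : Pol) : E := (\pi_E p)%qT.

(* hat v_i, i = 1,2,3 (here indexed by 'I_3 = {0,1,2}) *)
Definition vhat (i : 'I_3) : E := toE 'X_i.

Definition scaleE (c : CC) (x : E) : E := toE c%:MP * x.

(* so_3(C) (x) E, written in the basis alpha_1, alpha_2, alpha_3 of so_3: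
   the triple (h1, h2, h3) stands for alpha_1(x)h1 + alpha_2(x)h2 + alpha_3(x)h3. *)
Definition L := (E * E * E)%type.

Definition Lmk (a b c : E) : L := (a, b, c).
Definition L1 (x : L) : E := x.1.1.
Definition L2 (x : L) : E := x.1.2.
Definition L3 (x : L) : E := x.2.

Definition L0 : L := Lmk 0 0 0.
Definition Ladd (x y : L) : L := Lmk (L1 x + L1 y) (L2 x + L2 y) (L3 x + L3 y).
Definition Lopp (x : L) : L := Lmk (- L1 x) (- L2 x) (- L3 x).
Definition Lscale (c : CC) (x : L) : L :=
  Lmk (scaleE c (L1 x)) (scaleE c (L2 x)) (scaleE c (L3 x)).

(* [alpha (x) h1, beta (x) h2] = [alpha, beta] (x) h1 h2, with
   [a1,a2] = a3, [a2,a3] = a1, [a3,a1] = a2, extended bilinearly. *)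
Definition Lbr (x y : L) : L :=
  Lmk (L2 x * L3 y - L3 x * L2 y)
      (L3 x * L1 y - L1 x * L3 y)
      (L1 x * L2 y - L2 x * L1 y).

Definition genR1 : L := Lmk (vhat 0) 0 0.
Definition genR2 : L := Lmk 0 (vhat 1) 0.
Definition genR3 : L := Lmk 0 0 (vhat 2).

Definition is_subspace (S : L -> Prop) : Prop :=
  [/\ S L0, (forall x y, S x -> S y -> S (Ladd x y))
    & (forall c x, S x -> S (Lscale c x))].

Definition is_lie_subalg (S : L -> Prop) : Prop :=
  is_subspace S /\ (forall x y, S x -> S y -> S (Lbr x y)).

Definition Ralg (x : L) : Prop :=
  forall S, is_lie_subalg S -> S genR1 -> S genR2 -> S genR3 -> S x.

Definition Lsum (s : seq L) : L := foldr Ladd L0 s.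
Definition in_span (s : seq L) (x : L) : Prop :=
  exists c : seq CC, size c = size s /\ x = Lsum [seq Lscale ci.1 ci.2 | ci <- zip c s].

(* h is a Lie subalgebra of finite codimension in R :
   h is contained in R and R/h is finite dimensional, i.e. there are finitely
   many w_1..w_n in R with R contained in h + span(w_1..w_n). *)
Definition finite_codim_in (Rs h : L -> Prop) : Prop :=
  exists s : seq L, (forall w, w \in s -> Rs w) /\
    forall x, Rs x -> exists y, h y /\ in_span s (Ladd x (Lopp y)).

Definition is_lie_ideal (h J : L -> Prop) : Prop :=
  [/\ is_subspace J, (forall x, J x -> h x)
    & (forall x y, h x -> J y -> J (Lbr x y))].

(* derived series: J^(0) = J, J^(k+1) = [J^(k), J^(k)] (linear span of brackets) *)
Fixpoint derived (J : L -> Prop) (k : nat) : L -> Prop :=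
  match k with
  | 0 => J
  | k'.+1 => fun z => forall S, is_subspace S ->
       (forall x y, derived J k' x -> derived J k' y -> S (Lbr x y)) -> S z
  end.

Definition is_solvable (J : L -> Prop) : Prop :=
  exists k, forall x, derived J k x -> x = L0.

End Quotient_E.

(* E is the coordinate ring of the curve z_i^2 + e_i = z_j^2 + e_j in C^3. As a
   C[v_1]-module it is spanned by 1, v_2, v_3, v_2 v_3, and over each value t of z_1
   the curve has the four points (t, +-s_2, +-s_3); hence an element of E vanishing at
   all points outside finitely many fibres of z_1 is zero.

   For j <> i, -[alpha_j (x) v_j, [alpha_j (x) v_j, alpha_i (x) a]] = alpha_i (x) v_j^2 a,
   so R contains every alpha_i (x) v_i v_j^(2k). Finite codimension of h puts into h a
   nonzero combination alpha_i (x) m_i of these, and m_i^2 is a nonzero polynomial in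
   z_1 on the curve, so m_i is not a zero divisor.

   If A is an abelian ideal of h and x = sum_j alpha_j (x) x_j lies in A, the
   alpha_i-component of 0 = [[alpha_i (x) m_i, x], x] is -m_i sum_(j <> i) x_j^2. Hence
   sum_(j <> i) x_j^2 = 0 for all i, which forces x = 0 at every point of the curve.
   The last nonzero term of the derived series of a solvable ideal would be such an A. *)

From HB Require Import structures.
From mathcomp Require Import all_boot all_algebra.
From mathcomp Require Import boolp Rstruct complex.
From mathcomp Require Import mpoly ring_quotient generic_quotient.
From mathcomp Require Import ring.

Set Implicit Arguments.
Unset Strict Implicit.
Unset Printing Implicit Defensive.
Import GRing.Theory Num.Theory.
Local Open Scope ring_scope.

Lemma sign_pair_eq0 (R : numDomainType) (p q s : R) : s != 0 ->
  p + q * s = 0 -> p + q * - s = 0 -> p = 0 /\ q = 0.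
Proof.
move=> s0 e1 e2.
have /eqP : q * s *+ 2 = 0 by rewrite -[RHS](subrr 0) -{1}e1 -e2; ring.
rewrite mulrn_eq0 mulf_eq0 (negPf s0) orbF /= => /eqP q0.
by move: e1; rewrite q0 mul0r addr0.
Qed.

Lemma sign_points_coef_eq0 (R : numDomainType) (a b c d s t : R) :
  s != 0 -> t != 0 ->
  (forall x y, x ^+ 2 = s ^+ 2 -> y ^+ 2 = t ^+ 2 ->
     a + b * x + c * y + d * (x * y) = 0) ->
  [/\ a = 0, b = 0, c = 0 & d = 0].
Proof.
move=> s0 t0 f0.
have fiber y : y ^+ 2 = t ^+ 2 -> a + c * y = 0 /\ b + d * y = 0.
  move=> ty; apply: (sign_pair_eq0 s0).
  - by rewrite -(f0 s y) //; ring.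
  - by rewrite -(f0 (- s) y) ?sqrrN //; ring.
have [[ac1 bd1] [ac2 bd2]] := (fiber t erefl, fiber (- t) (sqrrN t)).
have [a0 c0] := sign_pair_eq0 t0 ac1 ac2.
by have [b0 d0] := sign_pair_eq0 t0 bd1 bd2.
Qed.

Lemma poly_eq0_outside_roots (R : numDomainType) (p q : {poly R}) :
  q != 0 -> (forall t, q.[t] != 0 -> p.[t] = 0) -> p = 0.
Proof.
move=> q0 pq0; suff /eqP : q * p = 0 by rewrite mulf_eq0 (negPf q0) => /eqP.
pose ts := [seq i%:R : R | i <- iota 0 (size (q * p))].
apply: (@roots_geq_poly_eq0 _ _ ts); last by rewrite size_map size_iota.
- apply/allP => _ /mapP [i _ ->]; rewrite rootE hornerM.
  by have [->|/pq0 ->] := eqVneq q.[i%:R] 0; rewrite ?mul0r ?mulr0.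
- by rewrite map_inj_uniq ?iota_uniq // => i j /eqP; rewrite eqr_nat => /eqP.
Qed.

Lemma off_diag_sums_eq0 (R : numDomainType) n (b : 'I_n -> R) : (1 < n)%N ->
  (forall i, \sum_(j | j != i) b j = 0) -> forall i, b i = 0.
Proof.
move=> n_gt1 sums; pose S := \sum_j b j.
have bS i : b i = S by apply/eqP; rewrite /S (bigD1 i) //= sums addr0.
have SnS : S *+ n.-1 + S = S.
  rewrite -mulrSr prednK ?(ltnW n_gt1) // {2}/S (eq_bigr (fun=> S)) => [|i _].
    by rewrite sumr_const card_ord.
  exact: bS.
move=> i; apply/eqP; move/eqP: SnS; rewrite bS -subr_eq0 addrK mulrn_eq0.
by rewrite -subn1 subn_eq0 leqNgt n_gt1.
Qed.

Section CombinationModuloSubspace.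
Variables (K : fieldType) (V : lmodType K) (H : V -> Prop).
Hypotheses (H0 : H 0) (HD : forall x y, H x -> H y -> H (x + y)).
Hypothesis HZ : forall a x, H x -> H (a *: x).

Lemma combination_in_subspace n (s : 'I_n -> V) (u y : 'I_n.+1 -> V)
    (c : 'I_n.+1 -> 'I_n -> K) :
  (forall k, H (y k)) -> (forall k, u k = y k + \sum_j c k j *: s j) ->
  exists2 d : 'rV[K]_n.+1, d != 0 & H (\sum_k d 0 k *: u k).
Proof.
move=> Hy u_def; pose M : 'M[K]_(n.+1, n) := \matrix_(k, j) c k j.
have /rowV0Pn [d /sub_kermxP dM d0] : kermx M != 0.
  by rewrite kermx_eq0 /row_free neq_ltn ltnS rank_leq_col.
exists d => //.
have -> : \sum_k d 0 k *: u k = \sum_k d 0 k *: y k.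
  under eq_bigr do rewrite u_def scalerDr.
  rewrite big_split /= [X in _ + X](_ : _ = 0) ?addr0 //.
  under eq_bigr do rewrite scaler_sumr.
  rewrite exchange_big big1 //= => j _.
  have dMj : \sum_k d 0 k * c k j = 0.
    have := congr1 (fun A : 'M_(1, n) => A 0 j) dM; rewrite /= !mxE => dMj.
    by rewrite -[RHS]dMj; apply: eq_bigr => k _; rewrite mxE.
  under eq_bigr do rewrite scalerA.
  by rewrite -scaler_suml dMj scale0r.
by apply: big_ind => // k _; apply: HZ.
Qed.
End CombinationModuloSubspace.

Lemma ord3_ind (P : 'I_3 -> Prop) : P 0 -> P 1 -> P 2 -> forall i, P i.
Proof.
move=> P0 P1 P2 [[|[|[|//]]] lti];
  [rewrite (_ : Ordinal lti = 0) | rewrite (_ : Ordinal lti = 1) |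
   rewrite (_ : Ordinal lti = 2)] => //; exact: val_inj.
Qed.

Section CoordinateRing.
Variables e1 e2 e3 : CC.
Local Notation E := (E e1 e2 e3).
Local Notation toE := (toE e1 e2 e3).
Local Notation vhat := (vhat e1 e2 e3).
Local Notation ee := (ee e1 e2 e3).

Fact toE_is_zmod_morphism : zmod_morphism toE. Proof. exact: rmorphB. Qed.
Fact toE_is_monoid_morphism : monoid_morphism toE.
Proof. by split; [exact: rmorph1 | exact: rmorphM]. Qed.
HB.instance Definition _ :=
  GRing.isZmodMorphism.Build Pol E toE toE_is_zmod_morphism.
HB.instance Definition _ :=
  GRing.isMonoidMorphism.Build Pol E toE toE_is_monoid_morphism.
HB.instance Definition _ := GRing.ComNzRing.on E.

Fact scaleEA a b (x : E) : scaleE a (scaleE b x) = scaleE (a * b) x.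
Proof. by rewrite /scaleE mulrA -rmorphM mpolyCM. Qed.
Fact scale1E : left_id 1 (@scaleE e1 e2 e3).
Proof. by move=> x; rewrite /scaleE rmorph1 mul1r. Qed.
Fact scaleEDr : right_distributive (@scaleE e1 e2 e3) +%R.
Proof. by move=> a x y; rewrite /scaleE mulrDr. Qed.
Fact scaleEDl (x : E) : {morph (fun a => scaleE a x) : a b / a + b}.
Proof. by move=> a b; rewrite /scaleE -mulrDl -rmorphD mpolyCD. Qed.
HB.instance Definition _ :=
  GRing.Zmodule_isLmodule.Build CC E scaleEA scale1E scaleEDr scaleEDl.
Fact scaleEAl a (x y : E) : a *: (x * y) = a *: x * y. Proof. exact: mulrA. Qed.
HB.instance Definition _ := GRing.Lmodule_isLalgebra.Build CC E scaleEAl.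
HB.instance Definition _ := GRing.Lalgebra_isComAlgebra.Build CC E.

Lemma toE_polyC c : toE c%:MP = c%:A.
Proof. by rewrite /GRing.scale /= /scaleE mulr1. Qed.

Lemma toE_surj (x : E) : exists p, x = toE p.
Proof. by exists (repr x); rewrite /toE reprK. Qed.

Definition on_curve (z : 'I_3 -> CC) := forall i, z i ^+ 2 = z 0 ^+ 2 + (ee 0 - ee i).

Record point := Point { coord :> 'I_3 -> CC; coordP : on_curve coord }.

Lemma meval_ideal (z : point) p : p \in Ipred e1 e2 e3 -> meval z p = 0.
Proof.
move=> /asboolP [q ->]; rewrite raddf_sum big1 // => i _.
rewrite raddf_sum big1 // => j _ /=.
rewrite mevalM /gen_I mevalD mevalB mevalC !rmorphXn /= !mevalXU.
rewrite (coordP z i) (coordP z j).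
rewrite [X in _ * X](_ : _ = 0) ?mulr0 //; ring.
Qed.

Definition ev (z : point) (x : E) : CC := meval z (repr x).

Lemma ev_toE z p : ev z (toE p) = meval z p.
Proof.
apply/eqP; rewrite -subr_eq0 -mevalB; apply/eqP/meval_ideal.
by rewrite Quotient.idealrBE reprK.
Qed.

Section Evaluation.
Variable z : point.

Fact ev_is_zmod_morphism : zmod_morphism (ev z).
Proof.
move=> x y; have [p ->] := toE_surj x; have [q ->] := toE_surj y.
by rewrite -rmorphB !ev_toE mevalB.
Qed.
Fact ev_is_monoid_morphism : monoid_morphism (ev z).
Proof.
split=> [|x y]; first by rewrite -(rmorph1 toE) ev_toE meval1.
have [p ->] := toE_surj x; have [q ->] := toE_surj y.
by rewrite -rmorphM !ev_toE mevalM.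
Qed.
HB.instance Definition _ :=
  GRing.isZmodMorphism.Build E CC (ev z) ev_is_zmod_morphism.
HB.instance Definition _ :=
  GRing.isMonoidMorphism.Build E CC (ev z) ev_is_monoid_morphism.

Lemma ev_vhat i : ev z (vhat i) = z i.
Proof. by rewrite /vhat ev_toE mevalXU. Qed.

Lemma evZ c x : ev z (c *: x) = c * ev z x.
Proof. by rewrite -mulr_algl rmorphM /= -toE_polyC ev_toE mevalC. Qed.

Lemma ev_horner_v0 (A : {poly CC}) : ev z (horner_alg (vhat 0) A) = A.[z 0].
Proof.
elim/poly_ind: A => [|A c IH]; first by rewrite !rmorph0 horner0.
rewrite !rmorphD rmorphM /= horner_algC horner_algX rmorphM /= ev_vhat IH.
by rewrite -[c%:A]mulr1 mulr_algl evZ rmorph1 mulr1 hornerMXaddC.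
Qed.
End Evaluation.

Lemma toE_gen_I i j : toE (gen_I e1 e2 e3 i j) = 0.
Proof.
apply/eqP; rewrite -(rmorph0 toE) -Quotient.idealrBE subr0.
apply/asboolP; exists (fun a b => ((a == i) && (b == j))%:R).
rewrite (bigD1 i) //= (bigD1 j) //= !eqxx mul1r !big1 ?addr0 // => [a ai | b bj].
  by apply: big1 => b _; rewrite (negPf ai) mul0r.
by rewrite (negPf bj) mul0r.
Qed.

Lemma vhat_sqr i : vhat i ^+ 2 = vhat 0 ^+ 2 + (ee 0 - ee i)%:A.
Proof.
have := toE_gen_I i 0; rewrite rmorphD rmorphB !rmorphXn /= toE_polyC => gen0.
by rewrite -[LHS]subr0 -gen0 !scalerBl; ring.
Qed.

Local Notation polyv0 := (horner_alg (vhat 0)).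

Definition nf (A B C D : {poly CC}) : E :=
  polyv0 A + polyv0 B * vhat 1 + polyv0 C * vhat 2 + polyv0 D * (vhat 1 * vhat 2).

Lemma ev_nf z A B C D : ev z (nf A B C D) =
  A.[z 0] + B.[z 0] * z 1 + C.[z 0] * z 2 + D.[z 0] * (z 1 * z 2).
Proof. by rewrite !rmorphD !rmorphM /= !ev_horner_v0 !ev_vhat. Qed.

Lemma mul_vhat_nf i A B C D :
  exists A' B' C' D', vhat i * nf A B C D = nf A' B' C' D'.
Proof.
have polyv0_sqr j : polyv0 ('X^2 + (ee 0 - ee j)%:P) = vhat j ^+ 2.
  by rewrite rmorphD rmorphXn /= horner_algX horner_algC vhat_sqr.
elim/ord3_ind: i.
- exists ('X * A), ('X * B), ('X * C), ('X * D).
  by rewrite /nf !rmorphM /= horner_algX; ring.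
- exists (('X^2 + (ee 0 - ee 1)%:P) * B), A, (('X^2 + (ee 0 - ee 1)%:P) * D), C.
  by rewrite /nf !rmorphM /= polyv0_sqr; ring.
- exists (('X^2 + (ee 0 - ee 2)%:P) * C), (('X^2 + (ee 0 - ee 2)%:P) * D), A, B.
  by rewrite /nf !rmorphM /= polyv0_sqr; ring.
Qed.

Lemma nf_monomial m : exists A B C D, toE 'X_[m] = nf A B C D.
Proof.
rewrite (@mpolyXE_id _ CC m) rmorph_prod.
elim/big_rec: _ => [|i y _ [A [B [C [D ->]]]]].
  by exists 1, 0, 0, 0; rewrite /nf rmorph1 !rmorph0; ring.
rewrite rmorphXn; elim: (m i) => [|k [A' [B' [C' [D' IHk]]]]].
  by exists A, B, C, D; rewrite expr0 mul1r.
by rewrite exprS -mulrA IHk; apply: mul_vhat_nf.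
Qed.

Lemma nf_surj (x : E) : exists A B C D, x = nf A B C D.
Proof.
have [p ->] := toE_surj x.
elim/mpolyind: p => [|c m p _ _ [A [B [C [D nfp]]]]].
  by exists 0, 0, 0, 0; rewrite /nf !rmorph0; ring.
have [A' [B' [C' [D' nfm]]]] := nf_monomial m.
exists (c%:P * A' + A), (c%:P * B' + B), (c%:P * C' + C), (c%:P * D' + D).
rewrite rmorphD /= nfp -mul_mpolyC rmorphM /= nfm toE_polyC /nf.
by rewrite !rmorphD !rmorphM /= horner_algC; ring.
Qed.

Lemma on_curve_fiber (t x y : CC) :
  x ^+ 2 = t ^+ 2 + (ee 0 - ee 1) -> y ^+ 2 = t ^+ 2 + (ee 0 - ee 2) ->
  on_curve (fun i => [:: t; x; y]`_i).
Proof. by move=> xt yt [[|[|[|]]] ?] //=; rewrite subrr addr0. Qed.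

Lemma ev_generic_eq0 (Q : {poly CC}) x :
  Q != 0 -> (forall z : point, Q.[z 0] != 0 -> ev z x = 0) -> x = 0.
Proof.
have [A [B [C [D ->]]]] := nf_surj x; move=> Q0 evx.
pose Q' := Q * ('X^2 + (ee 0 - ee 1)%:P) * ('X^2 + (ee 0 - ee 2)%:P).
have Q'0 : Q' != 0 by rewrite !mulf_neq0 // -size_poly_eq0 size_XnaddC.
suff fiber t : Q'.[t] != 0 -> [/\ A.[t] = 0, B.[t] = 0, C.[t] = 0 & D.[t] = 0].
  have [A0 B0 C0 D0] : [/\ A = 0, B = 0, C = 0 & D = 0].
    by split; apply: (poly_eq0_outside_roots Q'0) => t /fiber [].
  by rewrite /nf A0 B0 C0 D0 !rmorph0 !mul0r !addr0.
rewrite !hornerM !mulf_eq0 !negb_or !hornerD !hornerXn !hornerC.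
move=> /andP [/andP [Qt s1t] s2t].
have s1K := sqrtCK (t ^+ 2 + (ee 0 - ee 1)); have s2K := sqrtCK (t ^+ 2 + (ee 0 - ee 2)).
set s1 := sqrtC _ in s1K; set s2 := sqrtC _ in s2K.
apply: (@sign_points_coef_eq0 _ _ _ _ _ s1 s2).
- by rewrite -sqrf_eq0 s1K.
- by rewrite -sqrf_eq0 s2K.
move=> a b; rewrite s1K s2K => ha hb.
by have := evx (Point (on_curve_fiber ha hb)) Qt; rewrite ev_nf.
Qed.

Lemma ev_eq0 x : (forall z : point, ev z x = 0) -> x = 0.
Proof.
by move=> evx; apply: (@ev_generic_eq0 1) => [|z _]; [exact: oner_neq0 | exact: evx].
Qed.

Definition generic_nonzero (y : E) :=
  exists2 Q : {poly CC}, Q != 0 & forall z : point, ev z y ^+ 2 = Q.[z 0].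

Lemma generic_nonzero_mul_eq0 y x : generic_nonzero y -> y * x = 0 -> x = 0.
Proof.
move=> [Q Q0 evy] yx0; apply: (ev_generic_eq0 Q0) => z.
rewrite -evy sqrf_eq0 => /negPf y0.
by have /eqP := congr1 (ev z) yx0; rewrite rmorphM rmorph0 mulf_eq0 y0 => /eqP.
Qed.
End CoordinateRing.

Section LieAlgebra.
Variables e1 e2 e3 : CC.
Local Notation E := (E e1 e2 e3).
Local Notation L := (L e1 e2 e3).
Local Notation vhat := (vhat e1 e2 e3).
Local Notation ee := (ee e1 e2 e3).
Local Notation Ralg := (@Ralg e1 e2 e3).

HB.instance Definition _ := GRing.Lmodule.on L.

Definition Lcomp (i : 'I_3) (x : L) : E := [:: L1 x; L2 x; L3 x]`_i.

Definition Lalpha (i : 'I_3) (a : E) : L :=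
  Lmk (a *+ (i == 0 :> nat)) (a *+ (i == 1 :> nat)) (a *+ (i == 2 :> nat)).

Fact Lalpha_is_linear i : linear (Lalpha i).
Proof.
by move=> c a b; congr (_, _, _); rewrite /= mulrnDl scalerMnr.
Qed.
HB.instance Definition _ i :=
  GRing.isLinear.Build CC E L *:%R (Lalpha i) (Lalpha_is_linear i).

Lemma LaddE (x y : L) : x + y = Lmk (L1 x + L1 y) (L2 x + L2 y) (L3 x + L3 y).
Proof. by []. Qed.

Lemma LoppE (x : L) : - x = Lmk (- L1 x) (- L2 x) (- L3 x).
Proof. by []. Qed.

Lemma LscaleE c (x : L) :
  c *: x = Lmk (c%:A * L1 x) (c%:A * L2 x) (c%:A * L3 x).
Proof. by rewrite !mulr_algl. Qed.

Fact Lbr_is_linear x : linear (@Lbr e1 e2 e3 x).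
Proof.
move=> c y y'; rewrite !LaddE !LscaleE /Lbr /Lmk /L1 /L2 /L3 /=.
by congr (_, _, _); ring.
Qed.
HB.instance Definition _ x :=
  GRing.isLinear.Build CC L L *:%R (Lbr x) (Lbr_is_linear x).

Lemma Lbr_jacobi (g x y : L) : Lbr g (Lbr x y) = Lbr (Lbr g x) y + Lbr x (Lbr g y).
Proof. by rewrite LaddE /Lbr /Lmk /L1 /L2 /L3 /=; congr (_, _, _); ring. Qed.

Lemma Lcomp_eq0 x : (forall i, Lcomp i x = 0) -> x = 0.
Proof.
case: x => [[a b] c] x0; move: (x0 0) (x0 1) (x0 2).
by rewrite /Lcomp /L1 /L2 /L3 /= => -> -> ->.
Qed.

Lemma Lcomp0 i : Lcomp i 0 = 0.
Proof. by elim/ord3_ind: i. Qed.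

Lemma subspace_preim (f : {linear L -> L}) S : is_subspace S -> is_subspace (S \o f).
Proof.
move=> [S0 SD SZ]; split=> [|x y Sx Sy | c x Sx] /=.
- by rewrite (linear0 f).
- by rewrite (linearD f); apply: SD.
- by rewrite linearZZ; apply: SZ.
Qed.

Lemma Lcomp_br_br_alpha i m x :
  Lcomp i (Lbr (Lbr (Lalpha i m) x) x) = - (m * \sum_(j | j != i) Lcomp j x ^+ 2).
Proof.
rewrite big_mkcond !big_ord_recl big_ord0 /=.
by case: i => [[|[|[|]]] ?] //=; rewrite /Lbr /Lcomp /Lmk /L1 /L2 /L3 /=; ring.
Qed.

Lemma RalgZ c x : Ralg x -> Ralg (c *: x).
Proof. by move=> Rx S SL S1 S2 S3; have [[_ _ SZ] _] := SL; apply: SZ; apply: Rx. Qed.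

Lemma Ralg_br x y : Ralg x -> Ralg y -> Ralg (Lbr x y).
Proof.
by move=> Rx Ry S SL S1 S2 S3; have [_ SB] := SL; apply: SB; [apply: Rx | apply: Ry].
Qed.

Lemma Ralg_gen i : Ralg (Lalpha i (vhat i)).
Proof. by elim/ord3_ind: i => S _ R1 R2 R3. Qed.

Lemma br_gen_gen_alpha i j a : j != i ->
  Lbr (Lalpha j (vhat j)) (Lbr (Lalpha j (vhat j)) (Lalpha i a)) =
  - Lalpha i (vhat j ^+ 2 * a).
Proof.
elim/ord3_ind: i; elim/ord3_ind: j => //= _;
  by rewrite LoppE /Lbr /Lalpha /Lmk /L1 /L2 /L3 /=; congr (_, _, _); ring.
Qed.

Lemma Ralg_alpha_pow i j k : j != i -> Ralg (Lalpha i (vhat i * (vhat j ^+ 2) ^+ k)).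
Proof.
move=> ji; elim: k => [|k IH]; first by rewrite expr0 mulr1; apply: Ralg_gen.
rewrite exprS mulrCA -[Lalpha _ _]opprK -br_gen_gen_alpha // -scaleN1r.
apply: RalgZ; apply: Ralg_br; first exact: Ralg_gen.
by apply: Ralg_br; [exact: Ralg_gen | exact: IH].
Qed.

Lemma in_span_sum s v :
  in_span s v -> exists c : 'I_(size s) -> CC, v = \sum_j c j *: s`_j.
Proof.
move=> [c [cs ->]]; exists (fun j => c`_j).
elim: s c cs => [|x s IH] [|a c] //=; first by rewrite big_ord0.
by move=> [cs]; rewrite big_ord_recl /= (IH c cs).
Qed.

Lemma finite_codim_combination h (u : nat -> L) :
  is_subspace h -> finite_codim_in Ralg h -> (forall k, Ralg (u k)) ->
  exists n (d : 'rV[CC]_n.+1), d != 0 /\ h (\sum_(k < n.+1) d 0 k *: u k).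
Proof.
move=> [h0 hD hZ] [s [_ hs]] Ru.
have /fin_all_exists2 [y hy /fin_all_exists [c uc]] : forall k : 'I_(size s).+1,
    exists2 y, h y & exists c : 'I_(size s) -> CC, u k = y + \sum_j c j *: s`_j.
  move=> k; have [y [hy /in_span_sum [c uc]]] := hs _ (Ru k).
  by exists y => //; exists c; rewrite -uc addrC subrK.
have [d d0 hd] := combination_in_subspace h0 hD hZ hy uc.
by exists (size s), d.
Qed.

Lemma exists_alpha_generic h i : is_subspace h -> finite_codim_in Ralg h ->
  exists2 m, generic_nonzero m & h (Lalpha i m).
Proof.
move=> hS hcod.
have [j ji] : exists j : 'I_3, j != i.
  by elim/ord3_ind: i; [exists 1 | exists 0 | exists 0].
pose a k := vhat i * (vhat j ^+ 2) ^+ k.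
have [n [d [d0 hd]]] :=
  finite_codim_combination hS hcod (fun k => Ralg_alpha_pow k ji).
exists (\sum_k d 0 k *: a k); last first.
  by rewrite linear_sum; under eq_bigr do rewrite linearZ.
pose P := rVpoly d.
(* At [z 0] this is (z i * P.[z j ^+ 2]) ^+ 2, as z k ^+ 2 = z 0 ^+ 2 + (ee 0 - ee k). *)
exists (('X^2 + (ee 0 - ee i)%:P) * (P \Po ('X^2 + (ee 0 - ee j)%:P)) ^+ 2).
  have X2C0 c : 'X^2 + c%:P != 0 :> {poly CC} by rewrite -size_poly_eq0 size_XnaddC.
  rewrite mulf_neq0 ?expf_neq0 // comp_poly_eq0 ?size_XnaddC //.
  by apply: contra d0 => /eqP P0; rewrite -(rVpolyK d) -/P P0 linear0.
move=> z; rewrite hornerM horner_exp horner_comp !(hornerD, hornerXn, hornerC).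
rewrite -(coordP z i) -(coordP z j).
rewrite (@horner_coef_wide _ n.+1 P) ?size_poly // rmorph_sum -exprMn mulr_sumr.
congr (_ ^+ 2); apply: eq_bigr => k _.
by rewrite /= evZ rmorphM !rmorphXn /= !ev_vhat coef_rVpoly_ord mulrCA.
Qed.

Lemma abelian_ideal_eq0 h (A : L -> Prop) :
  is_subspace h -> finite_codim_in Ralg h ->
  (forall a b, A a -> A b -> Lbr a b = 0) ->
  (forall g x, h g -> A x -> A (Lbr g x)) ->
  forall x, A x -> x = 0.
Proof.
move=> hS hcod Aab hA x Ax.
have sums i : \sum_(j | j != i) Lcomp j x ^+ 2 = 0.
  have [m mgen hm] := exists_alpha_generic i hS hcod.
  apply: (generic_nonzero_mul_eq0 mgen); apply/eqP; rewrite -oppr_eq0.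
  by rewrite -Lcomp_br_br_alpha (Aab _ _ (hA _ _ hm Ax) Ax) Lcomp0.
apply: Lcomp_eq0 => j; apply: ev_eq0 => z; apply/eqP; rewrite -sqrf_eq0; apply/eqP.
apply: (off_diag_sums_eq0 (b := fun j => ev z (Lcomp j x) ^+ 2)) => // i.
transitivity (ev z (\sum_(j | j != i) Lcomp j x ^+ 2)); last by rewrite sums rmorph0.
by rewrite rmorph_sum; apply: eq_bigr => k _; rewrite rmorphXn.
Qed.

Section DerivedSeries.
Variables h J : L -> Prop.
Hypothesis J_ideal : is_lie_ideal h J.

Lemma derived_subspace k : is_subspace (derived J k).
Proof.
case: k => [|k]; first by case: J_ideal.
split=> [S [S0 _ _] _ | x y Dx Dy S SS SB | c x Dx S SS SB].
- exact: S0.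
- by have [_ SD _] := SS; apply: SD; [apply: Dx | apply: Dy].
- by have [_ _ SZ] := SS; apply: SZ; apply: Dx.
Qed.

Lemma derived_br k a b : derived J k a -> derived J k b -> derived J k.+1 (Lbr a b).
Proof. by move=> Da Db S _ SB; apply: SB. Qed.

Lemma derived_ideal k : is_lie_ideal h (derived J k).
Proof.
elim: k => [//|k [_ Dh DI]].
have Dsub z : derived J k.+1 z -> derived J k z.
  by move=> Dz; apply: Dz => [|a b Da Db]; [apply: derived_subspace | apply/DI/Db/Dh].
split=> [|z Dz|g z hg Dz]; first exact: derived_subspace.
  exact/Dh/Dsub.
have DD x y : derived J k.+1 x -> derived J k.+1 y -> derived J k.+1 (x + y).
  by have [_ DD _] := derived_subspace k.+1; exact: DD x y.
apply: (Dz (derived J k.+1 \o Lbr g)); first exact/subspace_preim/derived_subspace.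
move=> a b Da Db /=; rewrite Lbr_jacobi.
by apply: DD; apply: derived_br => //; apply: DI.
Qed.

Lemma derived_succ_eq0 k : is_subspace h -> finite_codim_in Ralg h ->
  (forall x, derived J k.+1 x -> x = 0) -> forall x, derived J k x -> x = 0.
Proof.
move=> hS hcod Dk1; have [_ _ DI] := derived_ideal k.
apply: (abelian_ideal_eq0 hS hcod _ DI) => a b Da Db.
by apply: Dk1; apply: derived_br.
Qed.
End DerivedSeries.
End LieAlgebra.

Theorem lemma6p4 (e1 e2 e3 : CC) (h : L e1 e2 e3 -> Prop) :
  e1 != e2 -> e1 != e3 -> e2 != e3 ->
  is_lie_subalg h ->
  (forall x, h x -> Ralg x) ->
  finite_codim_in (@Ralg e1 e2 e3) h ->
  forall J : L e1 e2 e3 -> Prop,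
    is_lie_ideal h J -> is_solvable J ->
    forall x, J x -> x = L0 e1 e2 e3.
Proof.
move=> _ _ _ [hS _] _ hcod J J_ideal [k].
elim: k => [//|k IH] Dk0; apply: IH.
exact: (derived_succ_eq0 J_ideal hS hcod Dk0).
Qed.
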